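(* Let $T,d\ge1$, $\gamma>0$, $\beta>0$, and for each $t\in\{1,\dots,T\}$ let $(x_{t1},y_{t1}),\dots,(x_{tm_t},y_{tm_t})\in\mathbb{R}^d\times\mathbb{R}$ be given, with $X_t=[x_{t1},\dots,x_{tm_t}]$. Let $l$ be a loss that is $c$-admissible with respect to the class of linear functions. Let $\sigma_{ti}$ ($t=1,\dots,T$, $i=1,\dots,m_t$) be independent Rademacher variables (uniform on $\{-1,1\}$), and define $$\mathfrak{R}_n(l\circ(A,a_0,U))=2E_\sigma\sup_{a_t,a_0,U}\sum_{t=1}^{T}\sum_{i=1}^{m_t}\sigma_{ti}\,l\big(y_{ti},\langle a_t+a_0,U^Tx_{ti}\rangle\big),$$ where the supremum is over $A=[a_1,\dots,a_T]\in\mathbb{R}^{d\times T}$, $a_0\in\mathbb{R}^d$ and $U\in\mathbb{R}^{d\times d}$ with $U^TU=I$, $\|A\|_{2,1}^2\le T/\gamma$ and $\|a_0\|_2^2\le1/\beta$. Then $$\mathfrak{R}_n(l\circ(A,a_0,U))\le 2c\left(\sqrt{\frac{T}{\gamma}}+\sqrt{\frac1\beta}\right)\sqrt{\sum_{t=1}^{T}m_tS(X_t)},$$ where $S(X_t)=\frac1{m_t}\sum_{i=1}^{m_t}\|x_{ti}\|_2^2$.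
   Context: For $A\in\mathbb{R}^{d\times T}$ with rows $a^1,\dots,a^d$, $\|A\|_{2,1}=\sum_{i=1}^d\|a^i\|_2$. A loss $l$ is $c$-admissible with respect to a hypothesis class $H$ if there is $c\ge0$ such that for all $h,h'\in H$ and all $(x,y)$, $|l(y,h(x))-l(y,h'(x))|\le c|h(x)-h'(x)|$. *)

From HB Require Import structures.
From mathcomp Require Import all_boot all_order all_algebra.
From mathcomp Require Import classical_sets reals.
Set Implicit Arguments. Unset Strict Implicit. Unset Printing Implicit Defensive.
Import Order.TTheory GRing.Theory Num.Theory.
Local Open Scope ring_scope.

Definition dotv (R : realType) (d : nat) (u v : 'cV[R]_d) : R :=
  \sum_(k < d) u k 0 * v k 0.
Definition norm2 (R : realType) (d : nat) (u : 'cV[R]_d) : R :=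
  Num.sqrt (dotv u u).

Definition norm21 (R : realType) (d T : nat) (A : 'M[R]_(d, T)) : R :=
  \sum_(i < d) Num.sqrt (\sum_(j < T) A i j ^+ 2).

Definition c_admissible_linear (R : realType) (d : nat) (l : R -> R -> R) (c : R) : Prop :=
  0 <= c /\
  forall (w w' x : 'cV[R]_d) (y : R),
    `| l y (dotv w x) - l y (dotv w' x) | <= c * `| dotv w x - dotv w' x |.

Definition rsign (R : realType) (b : bool) : R := if b then 1 else -1.

Definition Sdata (R : realType) (d mt : nat) (X : 'I_mt -> 'cV[R]_d) : R :=
  (mt%:R)^-1 * \sum_(i < mt) norm2 (X i) ^+ 2.

(* Rademacher complexity 2 E_sigma sup_{A,a0,U} sum_t sum_i sigma_ti l(y_ti, <a_t+a0, U^T x_ti>),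
   the expectation being the uniform average over all sign vectors sigma
   indexed by the pairs (t, i). *)
Definition rad_complexity (R : realType) (d T : nat) (m : 'I_T -> nat)
  (x : forall t : 'I_T, 'I_(m t) -> 'cV[R]_d) (y : forall t : 'I_T, 'I_(m t) -> R)
  (l : R -> R -> R) (gamma beta : R) : R :=
  2 * ((#|{ffun {t : 'I_T & 'I_(m t)} -> bool}|%:R)^-1 *
   \sum_(s : {ffun {t : 'I_T & 'I_(m t)} -> bool})
     sup [set v : R | exists (A : 'M[R]_(d, T)) (a0 : 'cV[R]_d) (U : 'M[R]_d),
            [/\ U^T *m U = 1%:M,
                norm21 A ^+ 2 <= T%:R / gamma,
                norm2 a0 ^+ 2 <= 1 / beta &
                v = \sum_(t < T) \sum_(i < m t)
                      rsign R (s (Tagged (fun t => 'I_(m t)) i)) *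
                      l (y t i) (dotv (col t A + a0) (U^T *m x t i))]]%classic).

From HB Require Import structures.
From mathcomp Require Import all_boot all_order all_algebra.
From mathcomp Require Import classical_sets reals.
From mathcomp Require Import ring lra.
Import Order.TTheory GRing.Theory Num.Theory.
Local Open Scope ring_scope.

(* The contraction principle for Rademacher averages (proved by pairing sign
   vectors that differ in one coordinate) replaces the c-Lipschitz losses by
   c times the linear predictions <a_t + a0, U^T x>.  For fixed signs, with
   Z_t = sum_i s_ti x_ti and U orthogonal, Hoelder's inequality gives
   sum_t <a_t, U^T Z_t> <= ||A||_{2,1} (sum_t ||Z_t||^2)^(1/2) and
   <a0, U^T sum_t Z_t> <= ||a0|| ||sum_t Z_t||.  Averaging over the signs,
   E sqrt X <= sqrt (E X) and E ||sum_q s_q v_q||^2 = sum_q ||v_q||^2. *)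

Set Implicit Arguments. Unset Strict Implicit. Unset Printing Implicit Defensive.

Lemma cauchy_schwarz_sqr (R : realFieldType) (K : finType) (a b : K -> R) :
  (\sum_k a k * b k) ^+ 2 <= (\sum_k a k ^+ 2) * (\sum_k b k ^+ 2).
Proof.
pose A := \sum_k a k ^+ 2; pose B := \sum_k b k ^+ 2; pose C := \sum_k a k * b k.
have double_sum (F G : K -> R) :
    \sum_i \sum_j F i * G j = (\sum_i F i) * (\sum_j G j).
  by rewrite mulr_suml; apply: eq_bigr => i _; rewrite mulr_sumr.
have lagrange :
    \sum_i \sum_j (a i * b j - a j * b i) ^+ 2 = 2 * (A * B) - 2 * C ^+ 2.
  transitivity (\sum_i \sum_j (a i ^+ 2 * b j ^+ 2 + a j ^+ 2 * b i ^+ 2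
                 - 2 * (a i * b i * (a j * b j)))).
    by apply: eq_bigr => i _; apply: eq_bigr => j _; ring.
  under eq_bigr do rewrite sumrB big_split /=.
  rewrite sumrB big_split /= [X in _ + X - _]exchange_big /=.
  under [X in _ - X]eq_bigr do rewrite -mulr_sumr.
  by rewrite -mulr_sumr !double_sum expr2 -/A -/B -/C; ring.
have : 0 <= \sum_i \sum_j (a i * b j - a j * b i) ^+ 2.
  by apply: sumr_ge0 => i _; apply: sumr_ge0 => j _; apply: sqr_ge0.
rewrite lagrange -/A -/B -/C; lra.
Qed.

Lemma cauchy_schwarz (R : rcfType) (K : finType) (a b : K -> R) :
  \sum_k a k * b k <= Num.sqrt (\sum_k a k ^+ 2) * Num.sqrt (\sum_k b k ^+ 2).
Proof.
rewrite -sqrtrM; last by apply: sumr_ge0 => k _; apply: sqr_ge0.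
apply: le_trans (ler_norm _) _.
by rewrite -sqrtr_sqr; apply/ler_wsqrtr/cauchy_schwarz_sqr.
Qed.

Lemma sum_sqrt_le (R : rcfType) (K : finType) (Q : K -> R) :
  (forall k, 0 <= Q k) ->
  \sum_k Num.sqrt (Q k) <= Num.sqrt (#|K|%:R * \sum_k Q k).
Proof.
move=> Q_ge0; have := cauchy_schwarz (fun k => Num.sqrt (Q k)) (fun _ => 1).
under eq_bigr do rewrite mulr1.
rewrite -sqrtrM; last by apply: sumr_ge0 => k _; rewrite sqr_sqrtr.
under [in X in _ <= X -> _]eq_bigr do rewrite sqr_sqrtr //.
by rewrite sumr_const expr1n mulrC.
Qed.

Lemma le_sqrt_of_sqr_le (R : rcfType) (a b : R) :
  0 <= a -> a ^+ 2 <= b -> a <= Num.sqrt b.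
Proof. by move=> a_ge0 ab; rewrite -(ger0_norm a_ge0) -sqrtr_sqr ler_wsqrtr. Qed.

Section Euclidean.
Variables (R : realType) (d : nat).
Implicit Types (u v w : 'cV[R]_d).

Lemma dotvv w : dotv w w = \sum_k w k 0 ^+ 2.
Proof. by apply: eq_bigr => k _; rewrite expr2. Qed.

Lemma dotvv_ge0 w : 0 <= dotv w w.
Proof. by rewrite dotvv sumr_ge0 // => k _; apply: sqr_ge0. Qed.

Lemma dotv_mx u v : dotv u v = (u^T *m v) 0 0.
Proof. by rewrite mxE; apply: eq_bigr => k _; rewrite mxE. Qed.

Lemma dotvDl u v w : dotv (u + v) w = dotv u w + dotv v w.
Proof. by rewrite !dotv_mx linearD mulmxDl mxE. Qed.

Lemma dotvZr u v a : dotv u (a *: v) = a * dotv u v.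
Proof. by rewrite !dotv_mx -scalemxAr mxE. Qed.

Lemma dotv_sumr (J : finType) (P : pred J) u (v : J -> 'cV[R]_d) :
  dotv u (\sum_(j | P j) v j) = \sum_(j | P j) dotv u (v j).
Proof.
rewrite /dotv exchange_big /=; apply: eq_bigr => k _.
by rewrite summxE mulr_sumr.
Qed.

Lemma dotv_le_norm2 u v : dotv u v <= norm2 u * norm2 v.
Proof. by rewrite /norm2 !dotvv; apply: cauchy_schwarz. Qed.

Lemma dotvv_orthogonal (U : 'M[R]_d) v :
  U^T *m U = 1%:M -> dotv (U^T *m v) (U^T *m v) = dotv v v.
Proof.
move=> /mulmx1C UUt; rewrite !dotv_mx trmx_mul trmxK.
by rewrite mulmxA -[_ *m U *m _]mulmxA UUt mulmx1.
Qed.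

Lemma coord_sqr_le_dotvv w k : w k 0 ^+ 2 <= dotv w w.
Proof.
by rewrite dotvv (bigD1 k) //= lerDl sumr_ge0 // => i _; apply: sqr_ge0.
Qed.

Lemma dotv_delta_mx k a :
  dotv (a *: delta_mx k 0) (delta_mx k 0 : 'cV[R]_d) = a.
Proof.
rewrite /dotv (bigD1 k) //= big1 => [|i /negbTE ik]; last first.
  by rewrite !mxE ik mulr0.
by rewrite !mxE eqxx !mulr1 addr0.
Qed.

Lemma norm21_ge0 T (A : 'M[R]_(d, T)) : 0 <= norm21 A.
Proof. by apply: sumr_ge0 => i _; apply: sqrtr_ge0. Qed.

Lemma sum_dotv_col_le T (A : 'M[R]_(d, T)) (w : 'I_T -> 'cV[R]_d) :
  \sum_t dotv (col t A) (w t) <= norm21 A * Num.sqrt (\sum_t dotv (w t) (w t)).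
Proof.
rewrite /norm21 mulr_suml /dotv exchange_big /=; apply: ler_sum => k _.
under eq_bigr do rewrite mxE.
apply: le_trans (cauchy_schwarz _ _) _.
apply/ler_wpM2l/ler_wsqrtr/ler_sum => [|t _]; first exact: sqrtr_ge0.
by rewrite -/(dotv _ _) coord_sqr_le_dotvv.
Qed.

End Euclidean.

Section Rademacher.
Variables (R : realType) (I : finType).
Local Notation signs := {ffun I -> bool}.
Local Notation N := (#|{ffun I -> bool}|%:R : R).

Lemma rsign_negb b : rsign R (~~ b) = - rsign R b.
Proof. by case: b; rewrite /rsign ?opprK. Qed.

Lemma rsign_mulrr b : rsign R b * rsign R b = 1.
Proof. by case: b; rewrite /rsign ?mulrNN mulr1. Qed.

Lemma normr_rsign b : `|rsign R b| = 1.
Proof. by case: b; rewrite /rsign ?normrN normr1. Qed.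

Definition flip_at (j : I) (s : signs) : signs := [ffun q => (q == j) (+) s q].

Lemma flip_atK j : involutive (flip_at j).
Proof. by move=> s; apply/ffunP => q; rewrite !ffunE addbA addbb. Qed.

Lemma flip_at_id j s : flip_at j s j = ~~ s j.
Proof. by rewrite ffunE eqxx. Qed.

Lemma flip_at_neq j q s : q != j -> flip_at j s q = s q.
Proof. by rewrite ffunE => /negbTE ->. Qed.

Lemma sum_flip_at j (F : signs -> R) : \sum_s F (flip_at j s) = \sum_s F s.
Proof. by rewrite [RHS](reindex_inj (can_inj (flip_atK j))). Qed.

Lemma sum_rsignM p q :
  \sum_(s : signs) rsign R (s p) * rsign R (s q) = if p == q then N else 0.
Proof.
have [<-|neq_pq] := eqVneq p q.
  by under eq_bigr do rewrite rsign_mulrr; rewrite sumr_const.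
set F := fun s : signs => rsign R (s p) * rsign R (s q).
have F_flip s : F (flip_at p s) = - F s.
  by rewrite /F flip_at_id flip_at_neq 1?eq_sym // rsign_negb mulNr.
have := sum_flip_at p F; under eq_bigr do rewrite F_flip.
rewrite sumrN => sumF; rewrite -/F; lra.
Qed.

Lemma sum_rsign_sqr (K : pred I) (a : I -> R) :
  \sum_(s : signs) (\sum_(q | K q) rsign R (s q) * a q) ^+ 2 =
  N * \sum_(q | K q) a q ^+ 2.
Proof.
have expand (s : signs) : (\sum_(q | K q) rsign R (s q) * a q) ^+ 2 =
    \sum_(q | K q) \sum_(q' | K q') a q * a q' * (rsign R (s q) * rsign R (s q')).
  rewrite expr2 mulr_suml; apply: eq_bigr => q _; rewrite mulr_sumr.
  by apply: eq_bigr => q' _; ring.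
under eq_bigr do rewrite expand.
rewrite exchange_big mulr_sumr; apply: eq_bigr => q Kq /=.
rewrite exchange_big (bigD1 q) //= [X in _ + X]big1 => [|q' /andP[_ q'q]].
  by rewrite -mulr_sumr sum_rsignM eqxx addr0; ring.
by rewrite -mulr_sumr sum_rsignM eq_sym (negbTE q'q) mulr0.
Qed.

Lemma sum_rsign_dotv d (K : pred I) (v : I -> 'cV[R]_d) :
  \sum_(s : signs) dotv (\sum_(q | K q) rsign R (s q) *: v q)
                        (\sum_(q | K q) rsign R (s q) *: v q) =
  N * \sum_(q | K q) dotv (v q) (v q).
Proof.
under eq_bigr do rewrite dotvv; under [X in _ * X]eq_bigr do rewrite dotvv.
rewrite exchange_big [X in _ * X]exchange_big mulr_sumr; apply: eq_bigr => k _ /=.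
rewrite -sum_rsign_sqr; apply: eq_bigr => s _; rewrite summxE.
by congr (_ ^+ 2); apply: eq_bigr => q _; rewrite mxE.
Qed.

End Rademacher.

Section Contraction.
Variables (R : realType) (I : finType) (P : Type).
Local Notation signs := {ffun I -> bool}.

Lemma contraction_step (j : I) (a b : P -> R) (G : signs -> P -> R) :
  (forall p p', a p - a p' <= `|b p - b p'|) ->
  (forall s p, G (flip_at j s) p = G s p) ->
  forall pi : signs -> P, exists pi' : signs -> P,
    \sum_(s : signs) (rsign R (s j) * a (pi s) + G s (pi s)) <=
    \sum_(s : signs) (rsign R (s j) * b (pi' s) + G s (pi' s)).
Proof.
move=> ab_lip G_flip pi.
(* On each pair {s, flip_at j s}, pi' swaps the two parameters when that puts
   the larger value of b on the sign +1. *)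
pose swap (s : signs) := if s j then b (pi s) < b (pi (flip_at j s))
                          else b (pi (flip_at j s)) < b (pi s).
pose pi' s := if swap s then pi (flip_at j s) else pi s.
pose L (s : signs) := rsign R (s j) * a (pi s) + G s (pi s).
pose L' (s : signs) := rsign R (s j) * b (pi' s) + G s (pi' s).
exists pi'; change (\sum_(s : signs) L s <= \sum_(s : signs) L' s).
have pair_le (s : signs) :
    s j -> L s + L (flip_at j s) <= L' s + L' (flip_at j s).
  move=> sj; rewrite /L /L' /pi' /swap flip_at_id sj flip_atK /= !G_flip.
  have := ab_lip (pi s) (pi (flip_at j s)).
  case: ltP => [lt_b|le_b].
    by rewrite ler0_norm ?subr_le0 ?(ltW lt_b) //; lra.
  by rewrite ger0_norm ?subr_ge0 //; lra.
suff: \sum_(s : signs) L s + \sum_(s : signs) L s <=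
      \sum_(s : signs) L' s + \sum_(s : signs) L' s by lra.
rewrite -{1}(sum_flip_at j L) -{1}(sum_flip_at j L') -!big_split /=.
apply: ler_sum => s _; rewrite addrC [X in _ <= X]addrC.
case sj: (s j); first exact: pair_le.
by have := pair_le (flip_at j s); rewrite flip_at_id sj flip_atK => /(_ isT); lra.
Qed.

Variables (c : R) (phi : I -> R -> R) (g : P -> I -> R).
Hypothesis c_ge0 : 0 <= c.
Hypothesis phi_lip : forall q u v, `|phi q u - phi q v| <= c * `|u - v|.

Definition linearized_sum (r : seq I) (s : signs) (p : P) :=
  \sum_q rsign R (s q) * (if q \in r then c * g p q else phi q (g p q)).

Lemma linearized_sum_le (r : seq I) (pi : signs -> P) :
  exists pi' : signs -> P,
    \sum_(s : signs) linearized_sum [::] s (pi s) <=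
    \sum_(s : signs) linearized_sum r s (pi' s).
Proof.
elim: r => [|j r [pi1 le_pi1]]; first by exists pi.
have [jr|jNr] := boolP (j \in r).
  exists pi1; apply: le_trans le_pi1 _; apply: ler_sum => s _.
  by apply: ler_sum => q _; rewrite in_cons; case: eqP => [->|]; rewrite /= ?jr.
pose G s p := \sum_(q | q != j)
  rsign R (s q) * (if q \in r then c * g p q else phi q (g p q)).
have [pi2 le_pi2] : exists pi2 : signs -> P,
    \sum_(s : signs) (rsign R (s j) * phi j (g (pi1 s) j) + G s (pi1 s)) <=
    \sum_(s : signs) (rsign R (s j) * (c * g (pi2 s) j) + G s (pi2 s)).
  apply: (contraction_step (a := fun p => phi j (g p j))
                            (b := fun p => c * g p j) (G := G)) => [p p'|s p].
    apply: le_trans (ler_norm _) _.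
    by rewrite -mulrBr normrM (ger0_norm c_ge0).
  by apply: eq_bigr => q qj; rewrite flip_at_neq.
exists pi2; apply: le_trans le_pi1 _.
rewrite /linearized_sum.
under eq_bigr do rewrite (bigD1 j) //= (negbTE jNr).
under [X in _ <= X]eq_bigr do rewrite (bigD1 j) //= in_cons eqxx.
apply: le_trans le_pi2 _; apply: ler_sum => s _; rewrite lerD2l.
by apply: ler_sum => q qj; rewrite in_cons (negbTE qj).
Qed.

Lemma contraction (pi : signs -> P) :
  exists pi' : signs -> P,
    \sum_(s : signs) \sum_q rsign R (s q) * phi q (g (pi s) q) <=
    c * \sum_(s : signs) \sum_q rsign R (s q) * g (pi' s) q.
Proof.
have [pi' le_pi'] := linearized_sum_le (enum I) pi.
exists pi'; move: le_pi'; rewrite /linearized_sum.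
under eq_bigr do under eq_bigr do rewrite in_nil.
under [X in _ <= X -> _]eq_bigr do under eq_bigr do rewrite mem_enum.
move=> /le_trans; apply; rewrite mulr_sumr; apply: ler_sum => s _.
by rewrite mulr_sumr; apply: ler_sum => q _; rewrite mulrCA.
Qed.

Variables (B : (I -> R) -> R) (p0 : P).
Hypothesis g_le_B : forall (eps : I -> R) p, \sum_q eps q * g p q <= B eps.

(* Only used to see that the suprema below are finite. *)
Lemma norm_g_le p q :
  `|g p q| <= Num.max (B (fun q' => if q' == q then 1 else 0))
                      (B (fun q' => if q' == q then -1 else 0)).
Proof.
have pick e : \sum_q' (if q' == q then e else 0) * g p q' = e * g p q.
  by rewrite (bigD1 q) //= eqxx big1 ?addr0 // => q' /negbTE ->; rewrite mul0r.
have := g_le_B (fun q' => if q' == q then -1 else 0) p.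
have := g_le_B (fun q' => if q' == q then 1 else 0) p.
rewrite !pick mul1r mulN1r => le_g le_Ng.
by rewrite ler_norml lerNl !le_max le_g le_Ng orbT.
Qed.

Lemma sum_sup_le :
  \sum_(s : signs) sup (range (fun p => \sum_q rsign R (s q) * phi q (g p q))) <=
  c * \sum_(s : signs) B (fun q => rsign R (s q)).
Proof.
pose value (s : signs) p := \sum_q rsign R (s q) * phi q (g p q).
change (\sum_(s : signs) sup (range (value s)) <=
        c * \sum_(s : signs) B (fun q => rsign R (s q))).
pose bound q : R :=
  `|phi q 0| + c * Num.max (B (fun q' => if q' == q then 1 else 0))
                           (B (fun q' => if q' == q then -1 else 0)).
have value_le s p : value s p <= \sum_q bound q.
  apply: ler_sum => q _; apply: le_trans (ler_norm _) _.
  rewrite normrM normr_rsign mul1r -[phi q _](subrK (phi q 0)) addrC.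
  apply: le_trans (ler_normD _ _) _; apply: lerD => //.
  apply: le_trans (phi_lip _ _ _) _; rewrite subr0.
  exact: ler_wpM2l c_ge0 _ _ (norm_g_le p q).
have has_sup_value s : has_sup (range (value s)).
  split; first by exists (value s p0), p0.
  by exists (\sum_q bound q) => _ [p _ <-]; apply: value_le.
pose N : R := #|{ffun I -> bool}|%:R.
have N_gt0 : 0 < N by rewrite ltr0n; apply/card_gt0P; exists [ffun=> true].
apply/ler_addgt0Pr => e e_gt0.
have /fin_all_exists [pi pi_sup] :
    forall s, exists p, sup (range (value s)) - e / N < value s p.
  move=> s; have e_N_gt0 := divr_gt0 e_gt0 N_gt0.
  by have [_ [p _ <-] lt_v] := sup_adherent e_N_gt0 (has_sup_value s); exists p.
have [pi' le_pi'] := contraction pi.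
apply: le_trans (_ : \sum_(s : signs) (value s (pi s) + e / N) <= _).
  by apply: ler_sum => s _; have := pi_sup s; lra.
rewrite big_split /= sumr_const -mulr_natr divfK ?gt_eqF // lerD2r.
apply: le_trans le_pi' _; apply: ler_wpM2l c_ge0 _ _ _.
by apply: ler_sum => s _; apply: g_le_B.
Qed.

End Contraction.

Section MultiTask.
Variables (R : realType) (T d : nat) (m : 'I_T -> nat).
Variables (x : forall t : 'I_T, 'I_(m t) -> 'cV[R]_d) (ra rb : R).
Arguments x : clear implicits.
Local Notation I := {t : 'I_T & 'I_(m t)}.
Local Notation params := ('M[R]_(d, T) * 'cV[R]_d * 'M[R]_d)%type.

Definition input (q : I) : 'cV[R]_d := x (tag q) (tagged q).

Definition feasible (p : params) : Prop :=
  [/\ p.2^T *m p.2 = 1%:M, norm21 p.1.1 ^+ 2 <= ra & norm2 p.1.2 ^+ 2 <= rb].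

Definition prediction (p : params) (q : I) : R :=
  dotv (col (tag q) p.1.1 + p.1.2) (p.2^T *m input q).

Definition task_sum (eps : I -> R) (t : 'I_T) : 'cV[R]_d :=
  \sum_(q | tag q == t) eps q *: input q.

Definition linear_bound (eps : I -> R) : R :=
  Num.sqrt ra * Num.sqrt (\sum_t dotv (task_sum eps t) (task_sum eps t))
  + Num.sqrt rb * norm2 (\sum_q eps q *: input q).

Lemma feasible0 : 0 <= ra -> 0 <= rb -> feasible (0, 0, 1%:M).
Proof.
move=> ra_ge0 rb_ge0; split => /=; first by rewrite trmx1 mul1mx.
  rewrite /norm21 big1 ?expr0n // => i _.
  by rewrite big1 ?sqrtr0 // => j _; rewrite mxE expr0n.
by rewrite /norm2 /dotv big1 ?sqrtr0 ?expr0n // => i _; rewrite mxE mul0r.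
Qed.

Lemma sum_prediction_le (eps : I -> R) (p : params) :
  feasible p -> \sum_q eps q * prediction p q <= linear_bound eps.
Proof.
case: p => [[A a0] U] [/= UU A_le a0_le].
pose Z := \sum_q eps q *: input q.
have by_task : \sum_t dotv (col t A) (U^T *m task_sum eps t) =
    \sum_q dotv (col (tag q) A) (U^T *m (eps q *: input q)).
  rewrite (partition_big tag xpredT) //=; apply: eq_bigr => t _.
  rewrite /task_sum mulmx_sumr dotv_sumr.
  by apply: eq_big => [q|q /eqP <-].
have -> : \sum_q eps q * prediction (A, a0, U) q =
    \sum_t dotv (col t A) (U^T *m task_sum eps t) + dotv a0 (U^T *m Z).
  rewrite by_task mulmx_sumr dotv_sumr -big_split /=.
  by apply: eq_bigr => q _; rewrite -dotvDl -scalemxAr dotvZr.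
apply: lerD.
  apply: le_trans (sum_dotv_col_le _ _) _.
  under eq_bigr do rewrite dotvv_orthogonal //.
  by apply: ler_wpM2r (sqrtr_ge0 _) _ _ (le_sqrt_of_sqr_le (norm21_ge0 A) A_le).
apply: le_trans (dotv_le_norm2 _ _) _.
rewrite {2}/norm2 dotvv_orthogonal //.
by apply: ler_wpM2r (sqrtr_ge0 _) _ _ (le_sqrt_of_sqr_le (sqrtr_ge0 _) a0_le).
Qed.

Lemma sum_linear_bound_le :
  \sum_(s : {ffun I -> bool}) linear_bound (fun q => rsign R (s q)) <=
  (Num.sqrt ra + Num.sqrt rb) *
    (#|{ffun I -> bool}|%:R * Num.sqrt (\sum_q dotv (input q) (input q))).
Proof.
pose N : R := #|{ffun I -> bool}|%:R; pose M := \sum_q dotv (input q) (input q).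
have mean_sqrt (Q : {ffun I -> bool} -> R) : (forall s, 0 <= Q s) ->
    \sum_s Q s = N * M -> \sum_s Num.sqrt (Q s) <= N * Num.sqrt M.
  move=> Q_ge0 sumQ; apply: le_trans (sum_sqrt_le Q_ge0) _.
  by rewrite sumQ mulrA sqrtrM ?mulr_ge0 // -expr2 sqrtr_sqr ger0_norm.
rewrite /linear_bound big_split /= -!mulr_sumr mulrDl.
apply: lerD; apply: ler_wpM2l (sqrtr_ge0 _) _ _ _; apply: mean_sqrt.
- by move=> s; apply: sumr_ge0 => t _; apply: dotvv_ge0.
- rewrite exchange_big /=; under eq_bigr do rewrite sum_rsign_dotv.
  by rewrite -mulr_sumr [X in _ = _ * X](partition_big tag xpredT).
- by move=> s; apply: dotvv_ge0.
- exact: sum_rsign_dotv xpredT input.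
Qed.

Lemma sum_Sdata : \sum_t (m t)%:R * Sdata (x t) = \sum_q dotv (input q) (input q).
Proof.
rewrite -(sig_big_dep xpredT (fun _ => xpredT)
           (fun t (i : 'I_(m t)) => dotv (x t i) (x t i))) /=.
apply: eq_bigr => t _; rewrite /Sdata mulrA.
have [mt0|mt_neq0] := eqVneq (m t) 0%N.
  by rewrite !big1 ?mulr0 // => i _;
     have := ltn_ord i; rewrite [X in (_ < X)%N]mt0.
rewrite mulfV ?pnatr_eq0 // mul1r.
by apply: eq_bigr => i _; rewrite /norm2 sqr_sqrtr ?dotvv_ge0.
Qed.

End MultiTask.

Lemma feasible_values (R : realType) (T d : nat) (m : 'I_T -> nat)
    (x : forall t : 'I_T, 'I_(m t) -> 'cV[R]_d) (y : forall t : 'I_T, 'I_(m t) -> R)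
    (l : R -> R -> R) (ra rb : R) (s : {ffun {t : 'I_T & 'I_(m t)} -> bool}) :
  [set v : R | exists (A : 'M[R]_(d, T)) (a0 : 'cV[R]_d) (U : 'M[R]_d),
     [/\ U^T *m U = 1%:M, norm21 A ^+ 2 <= ra, norm2 a0 ^+ 2 <= rb &
         v = \sum_(t < T) \sum_(i < m t)
               rsign R (s (Tagged (fun t => 'I_(m t)) i)) *
               l (y t i) (dotv (col t A + a0) (U^T *m x t i))]]%classic =
  range (fun p : {p | feasible ra rb p} =>
     \sum_q rsign R (s q) * l (y (tag q) (tagged q)) (prediction x (sval p) q)).
Proof.
have sum_tagged (A : 'M[R]_(d, T)) (a0 : 'cV[R]_d) (U : 'M[R]_d) :
    \sum_(t < T) \sum_(i < m t) rsign R (s (Tagged (fun t => 'I_(m t)) i)) *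
      l (y t i) (dotv (col t A + a0) (U^T *m x t i)) =
    \sum_q rsign R (s q) * l (y (tag q) (tagged q)) (prediction x (A, a0, U) q).
  by rewrite sig_big_dep; apply: eq_bigr => -[t i].
apply/seteqP; split=> [v [A [a0 [U [UU A_le a0_le ->]]]] | _ [[[[A a0] U] feas] _ <-]].
  by exists (exist _ (A, a0, U) (And3 UU A_le a0_le)) => //; rewrite sum_tagged.
by case: feas => UU A_le a0_le; exists A, a0, U; rewrite sum_tagged.
Qed.

Lemma c_admissible_lipschitz (R : realType) (d : nat) (l : R -> R -> R) (c : R) :
  (0 < d)%N -> c_admissible_linear d l c ->
  forall y u v, `|l y u - l y v| <= c * `|u - v|.
Proof.
move=> d_gt0 [_ l_adm] y u v; pose k : 'I_d := Ordinal d_gt0.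
have := l_adm (u *: delta_mx k 0) (v *: delta_mx k 0) (delta_mx k 0) y.
by rewrite !dotv_delta_mx.
Qed.

Unset Implicit Arguments. Set Strict Implicit.

Theorem lemma2 (R : realType) (T d : nat) (gamma beta c : R)
  (m : 'I_T -> nat)
  (x : forall t : 'I_T, 'I_(m t) -> 'cV[R]_d) (y : forall t : 'I_T, 'I_(m t) -> R)
  (l : R -> R -> R) :
  (0 < T)%N -> (0 < d)%N -> 0 < gamma -> 0 < beta ->
  c_admissible_linear d l c ->
  rad_complexity x y l gamma beta <=
    2 * c * (Num.sqrt (T%:R / gamma) + Num.sqrt (1 / beta)) *
    Num.sqrt (\sum_(t < T) (m t)%:R * Sdata (x t)).
Proof.
move=> _ d_gt0 gamma_gt0 beta_gt0 l_adm; have [c_ge0 _] := l_adm.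
set ra := T%:R / gamma; set rb := 1 / beta.
have p0 : {p : 'M[R]_(d, T) * 'cV[R]_d * 'M[R]_d | feasible ra rb p}.
  exists (0, 0, 1%:M).
  by apply: feasible0; apply: divr_ge0; rewrite ?ler0n ?ler01 ?ltW.
rewrite /rad_complexity sum_Sdata.
under eq_bigr => s _ do rewrite feasible_values.
have le_sup := sum_sup_le c_ge0
  (fun q => c_admissible_lipschitz d_gt0 l_adm (y (tag q) (tagged q))) p0
  (fun eps p => sum_prediction_le x eps (svalP p)).
have le_bound := sum_linear_bound_le x ra rb.
have N_gt0 : 0 < #|{ffun {t : 'I_T & 'I_(m t)} -> bool}|%:R :> R.
  by rewrite ltr0n; apply/card_gt0P; exists [ffun=> true].
rewrite -!mulrA ler_pM2l // ler_pdivrMl //; apply: le_trans le_sup _.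
by rewrite mulrCA ler_wpM2l // mulrCA.
Qed.
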